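(* Let $1<p<\infty$, let $\alpha\in SOS(\mathbb{R}_+)$, and let $\omega$ be its exponent function, i.e. $\alpha(t)=te^{\omega(t)}$. Then the function $\mathfrak c(t,x):=e^{i\omega(t)(x+i/p)}r_p(x)$, $(t,x)\in\mathbb{R}_+\times\mathbb{R}$, belongs to $C_b(\mathbb{R}_+,V(\mathbb{R}))$.
   Context: $\mathbb{R}_+=(0,\infty)$. $SO(\mathbb{R}_+)$: bounded continuous complex $f$ on $\mathbb{R}_+$ with $\lim_{r\to s}\sup\{|f(t)-f(\tau)|:t,\tau\in[\lambda r,r]\}=0$ for $s\in\{0,\infty\}$ and each (equivalently some) $\lambda\in(0,1)$. $SOS(\mathbb{R}_+)$: orientation-preserving diffeomorphisms $\alpha$ of $\mathbb{R}_+$ onto itself with no fixed points in $\mathbb{R}_+$ such that $\log\alpha'$ is bounded continuous and $\alpha'\in SO(\mathbb{R}_+)$; for such $\alpha$ the exponent function $\omega(t)=\log[\alpha(t)/t]$ is real-valued and lies in $SO(\mathbb{R}_+)$. $r_p(x)=1/\sinh[\pi(x+i/p)]$. $V(\mathbb{R})$ is the Banach algebra of absolutely continuous functions of finite total variation on $\mathbb{R}$ with norm $\|a\|_V=\|a\|_{L^\infty(\mathbb{R})}+\int_{\mathbb{R}}|a'(x)|dx$; $C_b(\mathbb{R}_+,V(\mathbb{R}))$ is the Banach algebra of bounded continuous maps $t\mapsto\mathfrak a(t,\cdot)$ from $\mathbb{R}_+$ to $V(\mathbb{R})$ with norm $\sup_t\|\mathfrak a(t,\cdot)\|_V$. *)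

From Stdlib Require Import Reals Lra List Sorted.
From Coquelicot Require Import Coquelicot.
Open Scope R_scope.

Definition Cexp (z : C) : C :=
  (exp (Re z) * cos (Im z), exp (Re z) * sin (Im z)).
Definition Csinh (z : C) : C := Cmult (RtoC (/ 2)) (Cminus (Cexp z) (Cexp (Copp z))).

Definition r_p (p x : R) : C :=
  Cinv (Csinh (Cmult (RtoC PI) (Cplus (RtoC x) (Cmult Ci (RtoC (/ p)))))).

Definition SO (f : R -> C) : Prop :=
  (exists M, forall t, 0 < t -> Cmod (f t) <= M) /\
  (forall t, 0 < t -> continuous f t) /\
  (forall lam, 0 < lam < 1 -> forall eps, 0 < eps ->
     exists delta, 0 < delta /\ forall r, 0 < r < delta ->
       forall t tau, lam * r <= t <= r -> lam * r <= tau <= r ->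
         Cmod (Cminus (f t) (f tau)) <= eps) /\
  (forall lam, 0 < lam < 1 -> forall eps, 0 < eps ->
     exists N, forall r, N < r ->
       forall t tau, lam * r <= t <= r -> lam * r <= tau <= r ->
         Cmod (Cminus (f t) (f tau)) <= eps).

Definition SOS (alpha : R -> R) : Prop :=
  (forall t, 0 < t -> 0 < alpha t) /\
  (forall s t, 0 < s -> s < t -> alpha s < alpha t) /\
  (forall t, 0 < t -> ex_derive alpha t /\ continuous (Derive alpha) t) /\
  (exists beta : R -> R,
     (forall t, 0 < t -> 0 < beta t /\ alpha (beta t) = t /\ beta (alpha t) = t) /\
     (forall t, 0 < t -> ex_derive beta t /\ continuous (Derive beta) t)) /\
  (forall t, 0 < t -> alpha t <> t) /\
  (forall t, 0 < t -> 0 < Derive alpha t) /\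
  (exists M, forall t, 0 < t -> Rabs (ln (Derive alpha t)) <= M) /\
  (forall t, 0 < t -> continuous (fun s => ln (Derive alpha s)) t) /\
  SO (fun t => RtoC (Derive alpha t)).

Definition exponent (alpha : R -> R) (t : R) : R := ln (alpha t / t).

Fixpoint var_sum (g : R -> C) (x : R) (l : list R) : R :=
  match l with
  | nil => 0
  | y :: l' => Cmod (Cminus (g y) (g x)) + var_sum g y l'
  end.

Definition total_variation (g : R -> C) : Rbar :=
  Lub_Rbar (fun v => exists x0 l, Sorted Rlt (x0 :: l) /\ v = var_sum g x0 l).

Definition sup_norm (g : R -> C) : Rbar :=
  Lub_Rbar (fun v => exists x, v = Cmod (g x)).

Fixpoint disjoint_chain (l : list (R * R)) : Prop :=
  match l with
  | nil => True
  | (a, b) :: l' =>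
      a < b /\
      (match l' with nil => True | (a', _) :: _ => b <= a' end) /\
      disjoint_chain l'
  end.

Definition total_length (l : list (R * R)) : R :=
  fold_right (fun ab s => snd ab - fst ab + s) 0 l.

Definition total_increment (g : R -> C) (l : list (R * R)) : R :=
  fold_right (fun ab s => Cmod (Cminus (g (snd ab)) (g (fst ab))) + s) 0 l.

Definition absolutely_continuous (g : R -> C) : Prop :=
  forall eps, 0 < eps -> exists delta, 0 < delta /\
    forall l, disjoint_chain l -> total_length l < delta ->
      total_increment g l < eps.

Definition in_V (g : R -> C) : Prop :=
  absolutely_continuous g /\ is_finite (total_variation g).

(* ||a||_V = ||a||_infty + int |a'| ; for a in V(R), int |a'| = total variation *)
Definition V_norm (g : R -> C) : Rbar := Rbar_plus (sup_norm g) (total_variation g).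

Definition in_Cb_V (c : R -> R -> C) : Prop :=
  (forall t, 0 < t -> in_V (c t)) /\
  (exists M, forall t, 0 < t -> Rbar_le (V_norm (c t)) (Finite M)) /\
  (forall t, 0 < t -> forall eps, 0 < eps -> exists delta, 0 < delta /\
     forall s, 0 < s -> Rabs (s - t) < delta ->
       Rbar_lt (V_norm (fun x => Cminus (c s x) (c t x))) (Finite eps)).

(* Write [c(t, x) = k(omega t, x)] with [k(a, x) = exp (i a (x + i / p)) r_p(x)].  The bounds
   [exp (-M) <= alpha' <= exp M] give [exp (-M) t <= alpha t <= exp M t], so [omega] is bounded,
   and it is continuous.  It therefore suffices that [a |-> k(a, .)] be bounded and Lipschitz into
   [V(R)] for [a] in a bounded set.  A function on [R] whose real and imaginary parts have
   derivatives bounded by [K / (1 + x^2)] has total variation at most [2 K PI] (compare with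
   [K atan]) and is [2 K]-Lipschitz, hence absolutely continuous.  Now [r_p] and [r_p'] decay like
   [1 / cosh (PI x)], which absorbs the factor [1 + |x|] produced by differentiating [k] in [a];
   so [k(a, .)], [d_x k(a, .)] and their increments in [a] all admit such bounds. *)

From Stdlib Require Import Reals Lra Sorted FunctionalExtensionality.
From Coquelicot Require Import Coquelicot.
Open Scope R_scope.

Lemma nondecreasing_of_derive_nonneg (f df : R -> R) :
  (forall x, is_derive f x (df x)) -> (forall x, 0 <= df x) ->
  forall x y, x <= y -> f x <= f y.
Proof.
  intros Hd Hpos x y Hxy.
  destruct (MVT_gen f x y df) as [c [_ Hc]].
  - intros z _; apply Hd.
  - intros z _. apply continuity_pt_filterlim, (ex_derive_continuous f z).
    eexists; apply Hd.
  - assert (0 <= df c * (y - x)) by (apply Rmult_le_pos; auto; lra). lra.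
Qed.

Lemma inv_1_plus_sqr_pos x : 0 < / (1 + x ^ 2).
Proof. apply Rinv_0_lt_compat. nra. Qed.

Lemma inv_1_plus_sqr_le_1 x : / (1 + x ^ 2) <= 1.
Proof. rewrite <- Rinv_1. apply Rinv_le_contravar; nra. Qed.

Lemma is_derive_atan x : is_derive atan x (/ (1 + x ^ 2)).
Proof. apply is_derive_Reals, derivable_pt_lim_atan. Qed.

Lemma atan_sub_le x y : x <= y -> atan y - atan x <= y - x.
Proof.
  intros Hxy.
  enough (x - atan x <= y - atan y) by lra.
  apply (nondecreasing_of_derive_nonneg (fun z => z - atan z) (fun z => 1 - / (1 + z ^ 2)));
    auto.
  - intros z. apply (is_derive_minus (fun z => z) atan z 1 (/ (1 + z ^ 2))).
    + apply (@is_derive_id R_AbsRing).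
    + apply is_derive_atan.
  - intros z. pose proof (inv_1_plus_sqr_le_1 z). lra.
Qed.

(* Both [K * atan - F] and [K * atan + F] are nondecreasing. *)
Lemma abs_sub_le_atan_of_derive (F dF : R -> R) (K : R) :
  (forall x, is_derive F x (dF x)) ->
  (forall x, Rabs (dF x) <= K * / (1 + x ^ 2)) ->
  forall x y, x <= y -> Rabs (F y - F x) <= K * (atan y - atan x).
Proof.
  intros Hd Hb x y Hxy.
  assert (HKatan : forall z, is_derive (fun z => K * atan z) z (K * / (1 + z ^ 2)))
    by (intros z; apply is_derive_scal, is_derive_atan).
  assert (K * atan x - F x <= K * atan y - F y).
  { apply (nondecreasing_of_derive_nonneg (fun z => K * atan z - F z)
                                          (fun z => K * / (1 + z ^ 2) - dF z)); auto.
    - intros z. apply (is_derive_minus (fun z => K * atan z)); auto.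
    - intros z. specialize (Hb z). apply Rabs_le_between in Hb. lra. }
  assert (K * atan x + F x <= K * atan y + F y).
  { apply (nondecreasing_of_derive_nonneg (fun z => K * atan z + F z)
                                          (fun z => K * / (1 + z ^ 2) + dF z)); auto.
    - intros z. apply (is_derive_plus (fun z => K * atan z)); auto.
    - intros z. specialize (Hb z). apply Rabs_le_between in Hb. lra. }
  apply Rabs_le_between. lra.
Qed.

Lemma Cmod_le_abs_fst_snd (z : C) : Cmod z <= Rabs (fst z) + Rabs (snd z).
Proof.
  pose proof (Rabs_pos (fst z)); pose proof (Rabs_pos (snd z)).
  unfold Cmod. rewrite <- (sqrt_pow2 (Rabs (fst z) + Rabs (snd z))) by lra.
  apply sqrt_le_1_alt.
  rewrite <- (pow2_abs (fst z)), <- (pow2_abs (snd z)). nra.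
Qed.

Lemma rot_abs_le c s u v :
  Rabs c <= 1 -> Rabs s <= 1 -> Rabs (c * u + s * v) <= Rabs u + Rabs v.
Proof.
  intros Hc Hs. eapply Rle_trans; [apply Rabs_triang|]. rewrite !Rabs_mult.
  pose proof (Rabs_pos u). pose proof (Rabs_pos v). nra.
Qed.

Lemma exp_le_exp x y : x <= y -> exp x <= exp y.
Proof. intros [Hxy | <-]; [left; apply exp_increasing | right]; auto. Qed.

Lemma abs_cos_le_1 y : Rabs (cos y) <= 1.
Proof. apply Rabs_le_between, COS_bound. Qed.

Lemma abs_sin_le_1 y : Rabs (sin y) <= 1.
Proof. apply Rabs_le_between, SIN_bound. Qed.

Lemma mul_abs_div_le c N D B :
  0 <= c -> 0 < D -> c * Rabs N <= B -> c * Rabs (N / D) <= B / D.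
Proof.
  intros Hc HD HB. rewrite Rabs_div, (Rabs_pos_eq D) by lra.
  unfold Rdiv. rewrite <- Rmult_assoc.
  apply Rmult_le_compat_r; [left; apply Rinv_0_lt_compat|]; lra.
Qed.

Lemma Lub_Rbar_finite_le (E : R -> Prop) (v0 B : R) :
  E v0 -> (forall v, E v -> v <= B) ->
  exists r, Lub_Rbar E = Finite r /\ r <= B.
Proof.
  intros H0 HB. destruct (Lub_Rbar_correct E) as [Hub Hlub].
  assert (Rbar_le (Finite v0) (Lub_Rbar E)) by (apply Hub; auto).
  assert (Rbar_le (Lub_Rbar E) (Finite B)) by (apply Hlub; intros v Hv; apply HB, Hv).
  destruct (Lub_Rbar E) as [r| |]; simpl in *; try contradiction.
  now exists r.
Qed.

Lemma total_length_nonneg l : disjoint_chain l -> 0 <= total_length l.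
Proof.
  induction l as [|[a b] l IH]; simpl; [lra|].
  intros [Hab [_ Hl]]. specialize (IH Hl). lra.
Qed.

Section DecayingDerivative.

Variables (g : R -> C) (dg1 dg2 : R -> R) (K : R).
Hypothesis Hd1 : forall x, is_derive (fun y => fst (g y)) x (dg1 x).
Hypothesis Hd2 : forall x, is_derive (fun y => snd (g y)) x (dg2 x).
Hypothesis Hb1 : forall x, Rabs (dg1 x) <= K * / (1 + x ^ 2).
Hypothesis Hb2 : forall x, Rabs (dg2 x) <= K * / (1 + x ^ 2).

Lemma decay_const_nonneg : 0 <= K.
Proof.
  pose proof (Hb1 0). pose proof (Rabs_pos (dg1 0)). pose proof (inv_1_plus_sqr_pos 0).
  destruct (Rle_or_lt 0 K); auto. nra.
Qed.

Lemma Cmod_sub_le_atan x y : x <= y -> Cmod (Cminus (g y) (g x)) <= 2 * K * (atan y - atan x).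
Proof.
  intros Hxy. eapply Rle_trans; [apply Cmod_le_abs_fst_snd|].
  pose proof (abs_sub_le_atan_of_derive _ _ K Hd1 Hb1 x y Hxy).
  pose proof (abs_sub_le_atan_of_derive _ _ K Hd2 Hb2 x y Hxy).
  simpl in *. unfold Rminus in *. lra.
Qed.

Lemma Cmod_sub_le_lipschitz x y : x <= y -> Cmod (Cminus (g y) (g x)) <= 2 * K * (y - x).
Proof.
  intros Hxy. pose proof (Cmod_sub_le_atan x y Hxy). pose proof (atan_sub_le x y Hxy).
  pose proof decay_const_nonneg. nra.
Qed.

(* The sum telescopes against [atan], which increases by less than [PI]. *)
Lemma var_sum_le_atan x l :
  Sorted Rlt (x :: l) -> var_sum g x l <= 2 * K * (PI / 2 - atan x).
Proof.
  revert x. induction l as [|y l IH]; intros x Hs; simpl.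
  - pose proof (atan_bound x). pose proof decay_const_nonneg. nra.
  - apply Sorted_inv in Hs as [Hs Hr]. apply HdRel_inv in Hr.
    pose proof (IH y Hs). pose proof (Cmod_sub_le_atan x y (Rlt_le _ _ Hr)). lra.
Qed.

Lemma total_variation_le : exists r, total_variation g = Finite r /\ r <= 2 * K * PI.
Proof.
  apply (Lub_Rbar_finite_le _ 0).
  - exists 0, nil. split; [repeat constructor | reflexivity].
  - intros v [x [l [Hs ->]]]. pose proof (var_sum_le_atan x l Hs).
    pose proof (atan_bound x). pose proof decay_const_nonneg. nra.
Qed.

Lemma total_increment_le l :
  disjoint_chain l -> total_increment g l <= 2 * K * total_length l.
Proof.
  induction l as [|[a b] l IH]; simpl; [lra|].
  intros [Hab [_ Hl]]. pose proof (IH Hl).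
  pose proof (Cmod_sub_le_lipschitz a b (Rlt_le _ _ Hab)). lra.
Qed.

Lemma absolutely_continuous_of_decay : absolutely_continuous g.
Proof.
  intros eps Heps. pose proof decay_const_nonneg.
  exists (eps / (2 * K + 1)). split; [apply Rdiv_lt_0_compat; lra|].
  intros l Hl Hlen.
  pose proof (total_increment_le l Hl). pose proof (total_length_nonneg l Hl).
  assert (total_length l * (2 * K + 1) < eps).
  { apply (Rmult_lt_compat_r (2 * K + 1)) in Hlen; [|lra].
    unfold Rdiv in Hlen. rewrite Rmult_assoc, Rinv_l in Hlen; lra. }
  nra.
Qed.

Lemma in_V_of_derive_decay B : (forall x, Cmod (g x) <= B) ->
  in_V g /\ Rbar_le (V_norm g) (Finite (B + 2 * K * PI)).
Proof.
  intros HB.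
  destruct total_variation_le as [tv [Htv Htvle]].
  destruct (Lub_Rbar_finite_le (fun v => exists x, v = Cmod (g x)) (Cmod (g 0)) B)
    as [s [Hs Hsle]]; [now exists 0 | intros v [x ->]; apply HB|].
  split; [split; [apply absolutely_continuous_of_decay | now rewrite Htv]|].
  unfold V_norm, sup_norm. rewrite Htv, Hs. simpl. lra.
Qed.

End DecayingDerivative.

Section RpComponents.

Variable p : R.
Hypothesis Hp : 1 < p.

Definition sin_pp := sin (PI / p).
Definition cos_pp := cos (PI / p).
Definition sh x := sinh (PI * x).
Definition ch x := cosh (PI * x).

(* [den x = |sinh (PI * (x + i / p))| ^ 2] *)
Definition den x := sh x ^ 2 + sin_pp ^ 2.
Definition rp_re x := sh x * cos_pp / den x.
Definition rp_im x := - (ch x * sin_pp) / den x.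
Definition rp_re' x := PI * cos_pp * ch x * (sin_pp ^ 2 - sh x ^ 2) / den x ^ 2.
Definition rp_im' x := PI * sin_pp * sh x * (2 * ch x ^ 2 - den x) / den x ^ 2.

Lemma sin_pp_pos : 0 < sin_pp.
Proof.
  pose proof PI_RGT_0. unfold sin_pp. apply sin_gt_0.
  - apply Rdiv_lt_0_compat; lra.
  - unfold Rdiv. rewrite <- (Rmult_1_r PI) at 2. apply Rmult_lt_compat_l; auto.
    rewrite <- Rinv_1. apply Rinv_lt_contravar; lra.
Qed.

Lemma sin_pp_le_1 : sin_pp <= 1.
Proof. apply SIN_bound. Qed.

Lemma cos_pp_sqr : cos_pp ^ 2 = 1 - sin_pp ^ 2.
Proof. unfold cos_pp, sin_pp. pose proof (sin2_cos2 (PI / p)). unfold Rsqr in *. nra. Qed.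

Lemma ch_sqr x : ch x ^ 2 = 1 + sh x ^ 2.
Proof.
  unfold ch, sh, cosh, sinh.
  assert (exp (PI * x) * exp (- (PI * x)) = 1)
    by (rewrite <- exp_plus, Rplus_opp_r; apply exp_0).
  nra.
Qed.

Lemma ch_ge_1 x : 1 <= ch x.
Proof.
  assert (0 < ch x) by (unfold ch, cosh; pose proof (exp_pos (PI * x));
    pose proof (exp_pos (- (PI * x))); lra).
  pose proof (ch_sqr x). nra.
Qed.

Lemma abs_sh_le_ch x : Rabs (sh x) <= ch x.
Proof.
  unfold ch, sh, cosh, sinh. pose proof (exp_pos (PI * x)).
  pose proof (exp_pos (- (PI * x))). apply Rabs_le_between. lra.
Qed.

Lemma sin_pp_sqr_le_1 : sin_pp ^ 2 <= 1.
Proof. pose proof sin_pp_le_1. pose proof sin_pp_pos. nra. Qed.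

Lemma den_ge x : sin_pp ^ 2 * ch x ^ 2 <= den x.
Proof.
  pose proof sin_pp_sqr_le_1. pose proof (pow2_ge_0 (sh x)).
  unfold den. rewrite ch_sqr. nra.
Qed.

Lemma den_le x : den x <= ch x ^ 2.
Proof.
  pose proof sin_pp_sqr_le_1. unfold den. rewrite ch_sqr. lra.
Qed.

Lemma den_pos x : 0 < den x.
Proof. pose proof sin_pp_pos. unfold den. nra. Qed.

Lemma is_derive_sh x : is_derive sh x (PI * ch x).
Proof. unfold sh, ch, sinh, cosh. auto_derive; auto. field. Qed.

Lemma is_derive_ch x : is_derive ch x (PI * sh x).
Proof. unfold sh, ch, sinh, cosh. auto_derive; auto. field. Qed.

Lemma is_derive_den x : is_derive den x (2 * PI * sh x * ch x).
Proof.
  pose proof (is_derive_sh x). unfold den. auto_derive.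
  - repeat split. eexists; eauto.
  - replace (Derive (fun y => sh y) x) with (PI * ch x)
      by (symmetry; now apply is_derive_unique).
    ring.
Qed.

Lemma is_derive_rp_re x : is_derive rp_re x (rp_re' x).
Proof.
  pose proof (is_derive_sh x). pose proof (is_derive_den x). pose proof (den_pos x).
  unfold rp_re. auto_derive.
  - repeat split; [eexists; eauto | eexists; eauto | lra].
  - replace (Derive (fun y => sh y) x) with (PI * ch x)
      by (symmetry; now apply is_derive_unique).
    replace (Derive (fun y => den y) x) with (2 * PI * sh x * ch x)
      by (symmetry; now apply is_derive_unique).
    unfold rp_re'. replace (sin_pp ^ 2 - sh x ^ 2) with (den x - 2 * sh x ^ 2)
      by (unfold den; ring).
    field. lra.
Qed.

Lemma is_derive_rp_im x : is_derive rp_im x (rp_im' x).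
Proof.
  pose proof (is_derive_ch x). pose proof (is_derive_den x). pose proof (den_pos x).
  unfold rp_im. auto_derive.
  - repeat split; [eexists; eauto | eexists; eauto | lra].
  - replace (Derive (fun y => ch y) x) with (PI * sh x)
      by (symmetry; now apply is_derive_unique).
    replace (Derive (fun y => den y) x) with (2 * PI * sh x * ch x)
      by (symmetry; now apply is_derive_unique).
    unfold rp_im'. field. lra.
Qed.

Lemma ch_sqr_div_den_le x : ch x ^ 2 / den x <= / sin_pp ^ 2.
Proof.
  pose proof (den_pos x). pose proof (den_ge x). pose proof sin_pp_pos.
  assert (0 < sin_pp ^ 2) by nra.
  apply (Rmult_le_reg_r (sin_pp ^ 2 * den x)); [nra|].
  replace (ch x ^ 2 / den x * (sin_pp ^ 2 * den x)) with (sin_pp ^ 2 * ch x ^ 2) by (field; lra).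
  replace (/ sin_pp ^ 2 * (sin_pp ^ 2 * den x)) with (den x) by (field; lra).
  lra.
Qed.

Lemma ch_mul_abs_rp_re x : ch x * Rabs (rp_re x) <= ch x ^ 2 / den x.
Proof.
  pose proof (ch_ge_1 x). pose proof (abs_sh_le_ch x). pose proof (den_pos x).
  pose proof (abs_cos_le_1 (PI / p)) as Hcos. fold cos_pp in Hcos.
  apply mul_abs_div_le; try lra.
  rewrite Rabs_mult. pose proof (Rabs_pos (sh x)). pose proof (Rabs_pos cos_pp).
  assert (Rabs (sh x) * Rabs cos_pp <= ch x) by nra. nra.
Qed.

Lemma ch_mul_abs_rp_im x : ch x * Rabs (rp_im x) <= ch x ^ 2 / den x.
Proof.
  pose proof (ch_ge_1 x). pose proof sin_pp_pos. pose proof sin_pp_le_1. pose proof (den_pos x).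
  apply mul_abs_div_le; try lra.
  rewrite Rabs_Ropp, Rabs_mult, !Rabs_pos_eq by lra. nra.
Qed.

Lemma ch_mul_abs_rp_re' x : ch x * Rabs (rp_re' x) <= PI * (ch x ^ 2 / den x).
Proof.
  pose proof (ch_ge_1 x). pose proof (den_pos x). pose proof PI_RGT_0.
  pose proof (abs_cos_le_1 (PI / p)) as Hcos. fold cos_pp in Hcos.
  assert (Rabs (sin_pp ^ 2 - sh x ^ 2) <= den x)
    by (unfold den; pose proof (pow2_ge_0 (sh x)); pose proof (pow2_ge_0 sin_pp);
        apply Rabs_le_between; lra).
  replace (PI * (ch x ^ 2 / den x)) with (PI * ch x ^ 2 * den x / den x ^ 2) by (field; lra).
  apply mul_abs_div_le; try nra.
  rewrite !Rabs_mult, (Rabs_pos_eq PI), (Rabs_pos_eq (ch x)) by lra.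
  pose proof (Rabs_pos cos_pp). pose proof (Rabs_pos (sin_pp ^ 2 - sh x ^ 2)).
  assert (Rabs cos_pp * Rabs (sin_pp ^ 2 - sh x ^ 2) <= den x) by nra.
  replace (ch x * (PI * Rabs cos_pp * ch x * Rabs (sin_pp ^ 2 - sh x ^ 2)))
    with (PI * ch x ^ 2 * (Rabs cos_pp * Rabs (sin_pp ^ 2 - sh x ^ 2))) by ring.
  apply Rmult_le_compat_l; nra.
Qed.

Lemma ch_mul_abs_rp_im' x : ch x * Rabs (rp_im' x) <= 2 * PI * (ch x ^ 2 / den x) ^ 2.
Proof.
  pose proof (ch_ge_1 x). pose proof (den_pos x). pose proof (den_le x). pose proof PI_RGT_0.
  pose proof sin_pp_pos. pose proof sin_pp_le_1. pose proof (abs_sh_le_ch x).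
  replace (2 * PI * (ch x ^ 2 / den x) ^ 2) with (2 * PI * ch x ^ 4 / den x ^ 2) by (field; lra).
  apply mul_abs_div_le; try nra.
  rewrite !Rabs_mult, (Rabs_pos_eq PI), (Rabs_pos_eq sin_pp), (Rabs_pos_eq (2 * ch x ^ 2 - den x))
    by nra.
  pose proof (Rabs_pos (sh x)).
  assert (sin_pp * Rabs (sh x) <= ch x) by nra.
  assert (ch x * (sin_pp * Rabs (sh x)) <= ch x ^ 2) by nra.
  replace (ch x * (PI * sin_pp * Rabs (sh x) * (2 * ch x ^ 2 - den x)))
    with (PI * (ch x * (sin_pp * Rabs (sh x))) * (2 * ch x ^ 2 - den x)) by ring.
  assert (0 <= 2 * ch x ^ 2 - den x <= 2 * ch x ^ 2) by nra.
  assert (0 <= sin_pp * Rabs (sh x)) by (apply Rmult_le_pos; lra).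
  replace (2 * PI * ch x ^ 4) with (PI * ch x ^ 2 * (2 * ch x ^ 2)) by ring.
  apply Rmult_le_compat; try lra.
  - apply Rmult_le_pos; nra.
  - apply Rmult_le_compat_l; lra.
Qed.

Definition rp_size x := Rabs (rp_re x) + Rabs (rp_im x) + Rabs (rp_re' x) + Rabs (rp_im' x).
Definition rp_const := (2 + PI) / sin_pp ^ 2 + 2 * PI / sin_pp ^ 4.

Lemma rp_const_pos : 0 < rp_const.
Proof.
  pose proof sin_pp_pos. pose proof PI_RGT_0. unfold rp_const.
  apply Rplus_lt_0_compat; apply Rdiv_lt_0_compat; try apply pow_lt; lra.
Qed.

Lemma rp_size_nonneg x : 0 <= rp_size x.
Proof.
  unfold rp_size. pose proof (Rabs_pos (rp_re x)). pose proof (Rabs_pos (rp_im x)).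
  pose proof (Rabs_pos (rp_re' x)). pose proof (Rabs_pos (rp_im' x)). lra.
Qed.

Lemma ch_mul_rp_size_le x : ch x * rp_size x <= rp_const.
Proof.
  pose proof (ch_mul_abs_rp_re x). pose proof (ch_mul_abs_rp_im x).
  pose proof (ch_mul_abs_rp_re' x). pose proof (ch_mul_abs_rp_im' x).
  pose proof (ch_sqr_div_den_le x). pose proof sin_pp_pos. pose proof PI_RGT_0.
  assert (0 <= ch x ^ 2 / den x) by (apply Rdiv_le_0_compat; [nra | apply den_pos]).
  assert ((ch x ^ 2 / den x) ^ 2 <= / sin_pp ^ 4)
    by (replace (/ sin_pp ^ 4) with ((/ sin_pp ^ 2) ^ 2) by (field; lra); apply pow_incr; lra).
  unfold rp_const, rp_size, Rdiv. nra.
Qed.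

(* Uses [exp u >= 1 + u] at [u = PI * y / 4] and [PI > 2]. *)
Lemma poly_weight_le_ch x : (1 + Rabs x) * (1 + x ^ 2) <= 16 * ch x.
Proof.
  assert (Hy : forall y, 0 <= y -> (1 + y) * (1 + y ^ 2) <= 8 * exp (PI * y)).
  { intros y Hy. pose proof PI2_1.
    assert (E : exp (PI * y) = exp (PI * y / 4) ^ 4).
    { simpl. rewrite Rmult_1_r, <- !exp_plus. f_equal. field. }
    pose proof (exp_ineq1_le (PI * y / 4)).
    assert (1 + y / 2 <= exp (PI * y / 4)) by nra.
    assert ((1 + y / 2) ^ 4 <= exp (PI * y / 4) ^ 4) by (apply pow_incr; lra).
    assert ((1 + y) * (1 + y ^ 2) <= 8 * (1 + y / 2) ^ 4).
    { assert (0 <= y ^ 2) by nra. assert (0 <= y ^ 3) by (apply pow_le; lra).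
      assert (0 <= y ^ 4) by (apply pow_le; lra). nra. }
    lra. }
  unfold ch, cosh. pose proof (exp_pos (PI * x)). pose proof (exp_pos (- (PI * x))).
  destruct (Rle_or_lt 0 x) as [Hx | Hx].
  - rewrite Rabs_pos_eq by lra. specialize (Hy x Hx). lra.
  - rewrite Rabs_left by lra. specialize (Hy (- x) ltac:(lra)).
    replace ((- x) ^ 2) with (x ^ 2) in Hy by ring.
    replace (PI * - x) with (- (PI * x)) in Hy by ring. lra.
Qed.

Lemma rp_size_decay x : (1 + Rabs x) * rp_size x <= 16 * rp_const * / (1 + x ^ 2).
Proof.
  pose proof (poly_weight_le_ch x). pose proof (ch_mul_rp_size_le x).
  pose proof (rp_size_nonneg x). pose proof (inv_1_plus_sqr_pos x).
  apply (Rmult_le_reg_r (1 + x ^ 2)); [nra|].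
  replace (16 * rp_const * / (1 + x ^ 2) * (1 + x ^ 2)) with (16 * rp_const) by (field; nra).
  nra.
Qed.

End RpComponents.

Section DampedWave.

Variables (p : R) (A B C D : R -> R).
Hypothesis Hp : 1 < p.

(* Real part of [exp (i b (x + i / p)) * ((A x + b B x) - i (C x + b D x))]; the family contains
   the real and imaginary parts of [exp (i b (x + i / p)) r_p(x)] and of its [x]-derivative. *)
Definition wave b x :=
  exp (- (b * / p)) *
  (cos (b * x) * (A x + b * B x) + sin (b * x) * (C x + b * D x)).

Definition wave' b x :=
  exp (- (b * / p)) *
  (- / p * (cos (b * x) * (A x + b * B x) + sin (b * x) * (C x + b * D x))
   + x * (- sin (b * x) * (A x + b * B x) + cos (b * x) * (C x + b * D x))
   + (cos (b * x) * B x + sin (b * x) * D x)).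

Definition amplitude x := Rabs (A x) + Rabs (B x) + Rabs (C x) + Rabs (D x).

Lemma amplitude_nonneg x : 0 <= amplitude x.
Proof.
  unfold amplitude. pose proof (Rabs_pos (A x)). pose proof (Rabs_pos (B x)).
  pose proof (Rabs_pos (C x)). pose proof (Rabs_pos (D x)). lra.
Qed.

Lemma is_derive_wave b x : is_derive (fun b => wave b x) b (wave' b x).
Proof. unfold wave, wave'. auto_derive; auto. ring. Qed.

Variable M : R.

Lemma damping_le b : Rabs b <= M -> exp (- (b * / p)) <= exp (M * / p).
Proof.
  intros Hb. assert (0 < / p) by (apply Rinv_0_lt_compat; lra).
  apply Rabs_le_between in Hb. apply exp_le_exp. nra.
Qed.

Lemma wave_amplitude_le b x : Rabs b <= M ->
  Rabs (A x + b * B x) + Rabs (C x + b * D x) <= (1 + M) * amplitude x.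
Proof.
  intros Hb. unfold amplitude.
  pose proof (Rabs_triang (A x) (b * B x)). pose proof (Rabs_triang (C x) (b * D x)).
  rewrite Rabs_mult in *. pose proof (Rabs_pos b).
  pose proof (Rabs_pos (A x)). pose proof (Rabs_pos (B x)).
  pose proof (Rabs_pos (C x)). pose proof (Rabs_pos (D x)).
  assert (Rabs b * Rabs (B x) <= M * Rabs (B x)) by nra.
  assert (Rabs b * Rabs (D x) <= M * Rabs (D x)) by nra.
  assert (0 <= M) by lra. nra.
Qed.

Lemma wave_abs_le b x : Rabs b <= M ->
  Rabs (wave b x) <= exp (M * / p) * (1 + M) * amplitude x.
Proof.
  intros Hb. unfold wave. rewrite Rabs_mult, Rabs_pos_eq by (left; apply exp_pos).
  pose proof (damping_le b Hb). pose proof (exp_pos (- (b * / p))).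
  pose proof (wave_amplitude_le b x Hb).
  pose proof (rot_abs_le (cos (b * x)) (sin (b * x)) (A x + b * B x) (C x + b * D x)
    (abs_cos_le_1 _) (abs_sin_le_1 _)).
  rewrite Rmult_assoc. apply Rmult_le_compat; auto using Rabs_pos; lra.
Qed.

Lemma wave'_abs_le b x : Rabs b <= M ->
  Rabs (wave' b x) <= exp (M * / p) * (2 + M) * ((1 + Rabs x) * amplitude x).
Proof.
  intros Hb. unfold wave'. rewrite Rabs_mult, Rabs_pos_eq by (left; apply exp_pos).
  pose proof (damping_le b Hb). pose proof (exp_pos (- (b * / p))).
  pose proof (wave_amplitude_le b x Hb). pose proof (amplitude_nonneg x).
  set (u := A x + b * B x) in *. set (v := C x + b * D x) in *.
  assert (Hip : 0 < / p) by (apply Rinv_0_lt_compat; lra).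
  assert (Hip1 : / p <= 1) by (rewrite <- Rinv_1; apply Rinv_le_contravar; lra).
  assert (E1 : Rabs (- / p * (cos (b * x) * u + sin (b * x) * v)) <= (1 + M) * amplitude x).
  { rewrite Rabs_mult, Rabs_Ropp, Rabs_pos_eq by lra.
    pose proof (rot_abs_le _ _ u v (abs_cos_le_1 (b * x)) (abs_sin_le_1 (b * x))).
    pose proof (Rabs_pos (cos (b * x) * u + sin (b * x) * v)). nra. }
  assert (E2 : Rabs (x * (- sin (b * x) * u + cos (b * x) * v))
               <= Rabs x * ((1 + M) * amplitude x)).
  { rewrite Rabs_mult. apply Rmult_le_compat_l; [apply Rabs_pos|].
    eapply Rle_trans; [apply rot_abs_le|]; [|apply abs_cos_le_1|lra].
    rewrite Rabs_Ropp. apply abs_sin_le_1. }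
  assert (E3 : Rabs (cos (b * x) * B x + sin (b * x) * D x) <= amplitude x).
  { eapply Rle_trans; [apply rot_abs_le; [apply abs_cos_le_1 | apply abs_sin_le_1]|].
    unfold amplitude. pose proof (Rabs_pos (A x)). pose proof (Rabs_pos (C x)). lra. }
  pose proof (Rabs_triang (- / p * (cos (b * x) * u + sin (b * x) * v))
                          (x * (- sin (b * x) * u + cos (b * x) * v))).
  pose proof (Rabs_triang (- / p * (cos (b * x) * u + sin (b * x) * v)
                           + x * (- sin (b * x) * u + cos (b * x) * v))
                          (cos (b * x) * B x + sin (b * x) * D x)).
  assert (0 <= M) by (pose proof (Rabs_pos b); lra). pose proof (Rabs_pos x).
  rewrite Rmult_assoc. apply Rmult_le_compat; auto using Rabs_pos; [lra|]. nra.
Qed.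

Lemma wave_sub_abs_le b b' x : Rabs b <= M -> Rabs b' <= M ->
  Rabs (wave b' x - wave b x)
  <= Rabs (b' - b) * (exp (M * / p) * (2 + M) * ((1 + Rabs x) * amplitude x)).
Proof.
  intros Hb Hb'.
  destruct (MVT_gen (fun b => wave b x) b b' (fun b => wave' b x)) as [c [Hc ->]].
  - intros z _. apply is_derive_wave.
  - intros z _. apply continuity_pt_filterlim, (ex_derive_continuous (fun b => wave b x)).
    eexists; apply is_derive_wave.
  - rewrite Rabs_mult, Rmult_comm. apply Rmult_le_compat_l; [apply Rabs_pos|].
    apply wave'_abs_le. apply Rabs_le_between in Hb, Hb'. apply Rabs_le_between.
    unfold Rmin, Rmax in Hc. destruct (Rle_dec b b'); lra.
Qed.

Variable K : R.
Hypothesis Hdecay : forall x, (1 + Rabs x) * amplitude x <= K * / (1 + x ^ 2).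

Lemma wave_decay b x : Rabs b <= M ->
  Rabs (wave b x) <= exp (M * / p) * (1 + M) * K * / (1 + x ^ 2).
Proof.
  intros Hb. pose proof (wave_abs_le b x Hb). pose proof (Hdecay x).
  pose proof (amplitude_nonneg x). pose proof (Rabs_pos x). pose proof (Rabs_pos b).
  assert (0 <= exp (M * / p) * (1 + M)) by (pose proof (exp_pos (M * / p)); nra).
  assert (amplitude x <= K * / (1 + x ^ 2)) by nra.
  rewrite (Rmult_assoc _ K). eapply Rle_trans; [eassumption|].
  apply Rmult_le_compat_l; lra.
Qed.

Lemma wave_sub_decay b b' x : Rabs b <= M -> Rabs b' <= M ->
  Rabs (wave b' x - wave b x)
  <= Rabs (b' - b) * (exp (M * / p) * (2 + M) * K) * / (1 + x ^ 2).
Proof.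
  intros Hb Hb'. pose proof (wave_sub_abs_le b b' x Hb Hb'). pose proof (Hdecay x).
  pose proof (Rabs_pos b).
  assert (0 <= exp (M * / p) * (2 + M)) by (pose proof (exp_pos (M * / p)); nra).
  eapply Rle_trans; [eassumption|].
  replace (Rabs (b' - b) * (exp (M * / p) * (2 + M) * K) * / (1 + x ^ 2))
    with (Rabs (b' - b) * (exp (M * / p) * (2 + M) * (K * / (1 + x ^ 2)))) by ring.
  apply Rmult_le_compat_l; [apply Rabs_pos|]. apply Rmult_le_compat_l; lra.
Qed.

End DampedWave.

Lemma Csinh_pi_eq p x :
  Csinh (Cmult (RtoC PI) (Cplus (RtoC x) (Cmult Ci (RtoC (/ p)))))
  = (sh x * cos_pp p, ch x * sin_pp p).
Proof.
  unfold Csinh, Cexp, sh, ch, sinh, cosh, sin_pp, cos_pp.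
  unfold Cmult, Cminus, Cplus, Copp, Ci, RtoC, Re, Im. simpl.
  rewrite cos_neg, sin_neg.
  replace (PI * (x + (0 * / p - 1 * 0)) - 0 * (0 + (0 * 0 + 1 * / p))) with (PI * x) by ring.
  replace (PI * (0 + (0 * 0 + 1 * / p)) + 0 * (x + (0 * / p - 1 * 0))) with (PI / p)
    by (unfold Rdiv; ring).
  f_equal; field.
Qed.

Lemma r_p_eq p x : r_p p x = (rp_re p x, rp_im p x).
Proof.
  unfold r_p. rewrite Csinh_pi_eq. unfold Cinv, rp_re, rp_im. cbn [fst snd].
  replace ((sh x * cos_pp p) ^ 2 + (ch x * sin_pp p) ^ 2) with (den p x)
    by (rewrite !Rpow_mult_distr, cos_pp_sqr, ch_sqr; unfold den; ring).
  reflexivity.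
Qed.

Section Kernel.

Variable p : R.
Hypothesis Hp : 1 < p.

Definition kernel_re a x := wave p (rp_re p) (fun _ => 0) (fun y => - rp_im p y) (fun _ => 0) a x.
Definition kernel_im a x := wave p (rp_im p) (fun _ => 0) (rp_re p) (fun _ => 0) a x.
Definition kernel_re' a x :=
  wave p (rp_re' p) (fun y => - rp_im p y) (fun y => - rp_im' p y) (fun y => - rp_re p y) a x.
Definition kernel_im' a x := wave p (rp_im' p) (rp_re p) (rp_re' p) (fun y => - rp_im p y) a x.

Definition kernel a x : C := (kernel_re a x, kernel_im a x).

Lemma kernel_eq a x :
  Cmult (Cexp (Cmult (Cmult Ci (RtoC a)) (Cplus (RtoC x) (Cmult Ci (RtoC (/ p))))))
        (r_p p x) = kernel a x.
Proof.
  rewrite r_p_eq. unfold kernel, kernel_re, kernel_im, wave, Cexp.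
  unfold Cmult, Cplus, Ci, RtoC, Re, Im. simpl.
  replace ((0 * a - 1 * 0) * (x + (0 * / p - 1 * 0)) - (0 * 0 + 1 * a) * (0 + (0 * 0 + 1 * / p)))
    with (- (a * / p)) by ring.
  replace ((0 * a - 1 * 0) * (0 + (0 * 0 + 1 * / p)) + (0 * 0 + 1 * a) * (x + (0 * / p - 1 * 0)))
    with (a * x) by ring.
  f_equal; ring.
Qed.

Lemma is_derive_kernel_re a x : is_derive (fun y => kernel_re a y) x (kernel_re' a x).
Proof.
  pose proof (is_derive_rp_re p Hp x). pose proof (is_derive_rp_im p Hp x).
  unfold kernel_re, kernel_re', wave. auto_derive.
  - repeat split; eexists; eauto.
  - replace (Derive (fun y => rp_re p y) x) with (rp_re' p x)
      by (symmetry; now apply is_derive_unique).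
    replace (Derive (fun y => rp_im p y) x) with (rp_im' p x)
      by (symmetry; now apply is_derive_unique).
    ring.
Qed.

Lemma is_derive_kernel_im a x : is_derive (fun y => kernel_im a y) x (kernel_im' a x).
Proof.
  pose proof (is_derive_rp_re p Hp x). pose proof (is_derive_rp_im p Hp x).
  unfold kernel_im, kernel_im', wave. auto_derive.
  - repeat split; eexists; eauto.
  - replace (Derive (fun y => rp_re p y) x) with (rp_re' p x)
      by (symmetry; now apply is_derive_unique).
    replace (Derive (fun y => rp_im p y) x) with (rp_im' p x)
      by (symmetry; now apply is_derive_unique).
    ring.
Qed.

Lemma amplitude_decay (A B C D : R -> R) :
  (forall x, amplitude A B C D x <= rp_size p x) ->
  forall x, (1 + Rabs x) * amplitude A B C D x <= 16 * rp_const p * / (1 + x ^ 2).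
Proof.
  intros Hle x. pose proof (rp_size_decay p Hp x). pose proof (Hle x).
  pose proof (Rabs_pos x). nra.
Qed.

Ltac amplitude_le_rp_size :=
  let y := fresh "y" in
  intros y; unfold amplitude, rp_size; rewrite ?Rabs_Ropp, ?Rabs_R0;
  pose proof (Rabs_pos (rp_re p y)); pose proof (Rabs_pos (rp_im p y));
  pose proof (Rabs_pos (rp_re' p y)); pose proof (Rabs_pos (rp_im' p y)); lra.

Lemma kernel_re_amplitude_decay x :
  (1 + Rabs x) * amplitude (rp_re p) (fun _ => 0) (fun y => - rp_im p y) (fun _ => 0) x
  <= 16 * rp_const p * / (1 + x ^ 2).
Proof. apply amplitude_decay. amplitude_le_rp_size. Qed.

Lemma kernel_im_amplitude_decay x :
  (1 + Rabs x) * amplitude (rp_im p) (fun _ => 0) (rp_re p) (fun _ => 0) x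
  <= 16 * rp_const p * / (1 + x ^ 2).
Proof. apply amplitude_decay. amplitude_le_rp_size. Qed.

Lemma kernel_re'_amplitude_decay x :
  (1 + Rabs x) * amplitude (rp_re' p) (fun y => - rp_im p y) (fun y => - rp_im' p y)
                   (fun y => - rp_re p y) x
  <= 16 * rp_const p * / (1 + x ^ 2).
Proof. apply amplitude_decay. amplitude_le_rp_size. Qed.

Lemma kernel_im'_amplitude_decay x :
  (1 + Rabs x) * amplitude (rp_im' p) (rp_re p) (rp_re' p) (fun y => - rp_im p y) x
  <= 16 * rp_const p * / (1 + x ^ 2).
Proof. apply amplitude_decay. amplitude_le_rp_size. Qed.

End Kernel.

Section Exponent.

Variable alpha : R -> R.
Hypothesis HS : SOS alpha.

Lemma SOS_derive_bounds : exists M,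
  forall t, 0 < t -> exp (- M) <= Derive alpha t <= exp M.
Proof.
  destruct HS as [_ [_ [_ [_ [_ [Hpos [[M HM] _]]]]]]].
  exists M. intros t Ht. specialize (HM t Ht). apply Rabs_le_between in HM.
  rewrite <- (exp_ln (Derive alpha t)) by auto. split; apply exp_le_exp; lra.
Qed.

Variable M : R.
Hypothesis HD : forall t, 0 < t -> exp (- M) <= Derive alpha t <= exp M.

Lemma SOS_sub_bounds s t : 0 < s -> s < t ->
  exp (- M) * (t - s) <= alpha t - alpha s <= exp M * (t - s).
Proof.
  intros Hs Hst. destruct HS as [_ [_ [Hder _]]].
  destruct (MVT_gen alpha s t (Derive alpha)) as [c [Hc ->]];
    rewrite Rmin_left, Rmax_right in * by lra.
  - intros z Hz. apply Derive_correct, Hder. lra.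
  - intros z Hz. apply continuity_pt_filterlim, (ex_derive_continuous alpha), Hder. lra.
  - specialize (HD c ltac:(lra)). split; nra.
Qed.

(* Let [s -> 0+] in [SOS_sub_bounds]: the lower bound only needs [alpha s > 0], the upper one
   needs [alpha s -> 0], i.e. that [alpha] is onto [R_+]. *)
Lemma SOS_ratio_bounds t : 0 < t -> exp (- M) * t <= alpha t <= exp M * t.
Proof.
  intros Ht. pose proof (exp_pos (- M)). pose proof (exp_pos M).
  destruct HS as [Hpos [Hinc [_ [[beta [Hbeta _]] _]]]].
  split; apply Rle_plus_epsilon; intros eps Heps.
  - assert (0 < Rmin (t / 2) (eps * exp M))
      by (apply Rmin_glb_lt; [lra | apply Rmult_lt_0_compat; lra]).
    pose proof (Rmin_l (t / 2) (eps * exp M)). pose proof (Rmin_r (t / 2) (eps * exp M)).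
    set (s := Rmin (t / 2) (eps * exp M)) in *.
    assert (exp (- M) * s <= eps).
    { replace eps with (exp (- M) * (eps * exp M))
        by (rewrite Rmult_comm, Rmult_assoc, <- exp_plus, Rplus_opp_r, exp_0; ring).
      apply Rmult_le_compat_l; lra. }
    pose proof (SOS_sub_bounds s t ltac:(lra) ltac:(lra)). pose proof (Hpos s ltac:(lra)).
    nra.
  - destruct (Hbeta eps Heps) as [Hs [Halpha _]].
    destruct (Rlt_or_le (beta eps) t) as [Hst | Hts].
    + pose proof (SOS_sub_bounds (beta eps) t Hs Hst). nra.
    + destruct Hts as [Hts | Heq];
        [pose proof (Hinc t (beta eps) Ht Hts) | rewrite <- Heq in Halpha]; nra.
Qed.

End Exponent.

Lemma exponent_bounded alpha : SOS alpha ->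
  exists M, forall t, 0 < t -> Rabs (exponent alpha t) <= M.
Proof.
  intros HS. destruct (SOS_derive_bounds alpha HS) as [M HD].
  exists M. intros t Ht.
  destruct (SOS_ratio_bounds alpha HS M HD t Ht) as [Hlo Hhi].
  assert (exp (- M) <= alpha t / t <= exp M).
  { split; apply (Rmult_le_reg_r t); auto; unfold Rdiv;
      rewrite Rmult_assoc, Rinv_l; lra. }
  pose proof (exp_pos (- M)).
  unfold exponent. apply Rabs_le_between. split.
  - rewrite <- (ln_exp (- M)). apply ln_le; lra.
  - rewrite <- (ln_exp M). apply ln_le; lra.
Qed.

Lemma exponent_continuous alpha : SOS alpha ->
  forall t, 0 < t -> forall eps, 0 < eps -> exists delta, 0 < delta /\
  forall s, Rabs (s - t) < delta -> Rabs (exponent alpha s - exponent alpha t) < eps.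
Proof.
  intros HS t Ht eps Heps. destruct HS as [Hpos [_ [Hder _]]].
  assert (Hc : continuity_pt (exponent alpha) t).
  { apply continuity_pt_filterlim, (ex_derive_continuous (exponent alpha)).
    destruct (Hder t Ht) as [Hd _]. pose proof (Hpos t Ht).
    unfold exponent. auto_derive. repeat split; auto; try lra.
    apply Rdiv_lt_0_compat; lra. }
  destruct (Hc eps Heps) as [d [Hd Hf]].
  exists d. split; auto. intros s Hsd.
  destruct (Req_dec s t) as [-> | Hne].
  - unfold Rminus. rewrite Rplus_opp_r, Rabs_R0. auto.
  - apply (Hf s). repeat split; auto.
Qed.

Section KernelInV.

Variables (p M : R).
Hypothesis Hp : 1 < p.

Definition kernel_bound := exp (M * / p) * (1 + M) * (16 * rp_const p).
Definition kernel_lip := exp (M * / p) * (2 + M) * (16 * rp_const p).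

Lemma kernel_bound_nonneg : 0 <= M -> 0 <= kernel_bound.
Proof.
  intros HM. pose proof (exp_pos (M * / p)). pose proof (rp_const_pos p Hp).
  unfold kernel_bound. apply Rmult_le_pos; [apply Rmult_le_pos |]; lra.
Qed.

Lemma kernel_lip_nonneg : 0 <= M -> 0 <= kernel_lip.
Proof.
  intros HM. pose proof (exp_pos (M * / p)). pose proof (rp_const_pos p Hp).
  unfold kernel_lip. apply Rmult_le_pos; [apply Rmult_le_pos |]; lra.
Qed.

Lemma kernel_in_V a : Rabs a <= M ->
  in_V (kernel p a) /\
  Rbar_le (V_norm (kernel p a)) (Finite (2 * kernel_bound + 2 * kernel_bound * PI)).
Proof.
  intros Ha. assert (HM : 0 <= M) by (pose proof (Rabs_pos a); lra).
  apply (in_V_of_derive_decay _ (kernel_re' p a) (kernel_im' p a)).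
  - apply is_derive_kernel_re, Hp.
  - apply is_derive_kernel_im, Hp.
  - intros x. apply wave_decay; auto. apply kernel_re'_amplitude_decay, Hp.
  - intros x. apply wave_decay; auto. apply kernel_im'_amplitude_decay, Hp.
  - intros x. eapply Rle_trans; [apply Cmod_le_abs_fst_snd|].
    pose proof (wave_decay p _ _ _ _ Hp M _ (kernel_re_amplitude_decay p Hp) a x Ha).
    pose proof (wave_decay p _ _ _ _ Hp M _ (kernel_im_amplitude_decay p Hp) a x Ha).
    pose proof (inv_1_plus_sqr_le_1 x). pose proof (inv_1_plus_sqr_pos x).
    pose proof (kernel_bound_nonneg HM). fold kernel_bound in *.
    change (Rabs (kernel_re p a x) + Rabs (kernel_im p a x) <= 2 * kernel_bound).
    unfold kernel_re, kernel_im. nra.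
Qed.

Lemma kernel_sub_V_norm_le a a' : Rabs a <= M -> Rabs a' <= M ->
  Rbar_le (V_norm (fun x => Cminus (kernel p a' x) (kernel p a x)))
          (Finite (Rabs (a' - a) * (kernel_lip * (2 + 2 * PI)))).
Proof.
  intros Ha Ha'. assert (HM : 0 <= M) by (pose proof (Rabs_pos a); lra).
  set (K := Rabs (a' - a) * kernel_lip).
  enough (HV : Rbar_le (V_norm (fun x => Cminus (kernel p a' x) (kernel p a x)))
                       (Finite (2 * K + 2 * K * PI)))
    by (eapply Rbar_le_trans; [apply HV|]; simpl; unfold K; lra).
  apply (in_V_of_derive_decay _ (fun x => kernel_re' p a' x - kernel_re' p a x)
                          (fun x => kernel_im' p a' x - kernel_im' p a x) K).
  - intros x. apply (is_derive_minus (fun y => kernel_re p a' y) (fun y => kernel_re p a y));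
      apply is_derive_kernel_re, Hp.
  - intros x. apply (is_derive_minus (fun y => kernel_im p a' y) (fun y => kernel_im p a y));
      apply is_derive_kernel_im, Hp.
  - intros x. apply wave_sub_decay; auto. apply kernel_re'_amplitude_decay, Hp.
  - intros x. apply wave_sub_decay; auto. apply kernel_im'_amplitude_decay, Hp.
  - intros x. eapply Rle_trans; [apply Cmod_le_abs_fst_snd|].
    pose proof (wave_sub_decay p _ _ _ _ Hp M _ (kernel_re_amplitude_decay p Hp) a a' x Ha Ha')
      as Hre.
    pose proof (wave_sub_decay p _ _ _ _ Hp M _ (kernel_im_amplitude_decay p Hp) a a' x Ha Ha')
      as Him.
    pose proof (inv_1_plus_sqr_le_1 x). pose proof (inv_1_plus_sqr_pos x).
    assert (0 <= K) by (apply Rmult_le_pos; [apply Rabs_pos | apply kernel_lip_nonneg, HM]).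
    fold kernel_lip in Hre, Him. fold K in Hre, Him.
    change (Rabs (kernel_re p a' x - kernel_re p a x) + Rabs (kernel_im p a' x - kernel_im p a x)
            <= 2 * K).
    unfold kernel_re, kernel_im. nra.
Qed.

Lemma kernel_comp_V_continuous (w : R -> R) t :
  (forall s, 0 < s -> Rabs (w s) <= M) -> 0 < t ->
  (forall eps, 0 < eps -> exists delta, 0 < delta /\
     forall s, Rabs (s - t) < delta -> Rabs (w s - w t) < eps) ->
  forall eps, 0 < eps -> exists delta, 0 < delta /\
    forall s, 0 < s -> Rabs (s - t) < delta ->
      Rbar_lt (V_norm (fun x => Cminus (kernel p (w s) x) (kernel p (w t) x))) (Finite eps).
Proof.
  intros Hw Ht Hcont eps Heps.
  assert (HM : 0 <= M) by (pose proof (Hw t Ht); pose proof (Rabs_pos (w t)); lra).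
  set (L := kernel_lip * (2 + 2 * PI)).
  assert (0 <= L) by (pose proof (kernel_lip_nonneg HM); pose proof PI_RGT_0; unfold L; nra).
  destruct (Hcont (eps / (L + 1))) as [d [Hd Hwd]]; [apply Rdiv_lt_0_compat; lra|].
  exists d. split; auto. intros s Hs Hsd.
  eapply Rbar_le_lt_trans; [apply kernel_sub_V_norm_le; auto|].
  specialize (Hwd s Hsd). simpl. fold L.
  apply Rle_lt_trans with (eps / (L + 1) * L); [apply Rmult_le_compat_r; lra|].
  apply (Rmult_lt_reg_r (L + 1)); [lra|].
  replace (eps / (L + 1) * L * (L + 1)) with (eps * L) by (field; lra). nra.
Qed.

End KernelInV.

Theorem lemma7p3 (p : R) (alpha : R -> R) :
  1 < p -> SOS alpha ->
  in_Cb_V (fun t x =>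
    Cmult (Cexp (Cmult (Cmult Ci (RtoC (exponent alpha t)))
                       (Cplus (RtoC x) (Cmult Ci (RtoC (/ p))))))
          (r_p p x)).
Proof.
  intros Hp HS.
  replace (fun t x => _) with (fun t => kernel p (exponent alpha t))
    by (do 2 (apply functional_extensionality; intro); symmetry; apply kernel_eq).
  destruct (exponent_bounded alpha HS) as [M Hbound].
  split; [|split].
  - intros t Ht. apply (kernel_in_V p M Hp), Hbound, Ht.
  - exists (2 * kernel_bound p M + 2 * kernel_bound p M * PI).
    intros t Ht. apply (kernel_in_V p M Hp), Hbound, Ht.
  - intros t Ht. apply (kernel_comp_V_continuous p M Hp); auto.
    now apply exponent_continuous.
Qed.
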